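(* Let $\mathfrak{G}$ be a compactly generated groupoid of germs. Then for every compact topological transversal $X\subset\mathfrak{G}^{(0)}$ there exists a compact set $S\subset\mathfrak{G}|_X$ such that $(S,X)$ is a compact generating pair of $\mathfrak{G}$.
   Context: $\mathfrak{G}$ is the groupoid of germs of a pseudogroup of homeomorphisms between open subsets of a locally compact metrizable space $\mathfrak{G}^{(0)}$ (germs $(F,x)$ with $\mathsf{o}(F,x)=x$, $\mathsf{t}(F,x)=F(x)$, germ topology). For $A\subset\mathfrak{G}^{(0)}$, $\mathfrak{G}|_A=\{g:\mathsf{o}(g),\mathsf{t}(g)\in A\}$. A set $X\subset\mathfrak{G}^{(0)}$ is a topological transversal if it contains an open set meeting every $\mathfrak{G}$-orbit. A compact generating pair is a pair $(S,X)$ of compact sets $S\subset\mathfrak{G}$, $X\subset\mathfrak{G}^{(0)}$, with $X$ a topological transversal, such that for every $g\in\mathfrak{G}|_X$ there is $n$ such that $\bigcup_{k=1}^n(S\cup S^{-1})^k$ is a neighborhood of $g$ in $\mathfrak{G}|_X$. $\mathfrak{G}$ is compactly generated if it has a compact generating pair. *)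

From HB Require Import structures.
From mathcomp Require Import all_boot all_order all_algebra.
From mathcomp Require Import all_classical all_reals all_analysis.
From mathcomp Require Import Rstruct Rstruct_topology.
Set Implicit Arguments. Unset Strict Implicit. Unset Printing Implicit Defensive.
Import Order.TTheory GRing.Theory Num.Theory.
Local Open Scope classical_set_scope.
Local Open Scope ring_scope.

Section Germs.
Variable T : topologicalType.

Definition loc_compact_space : Prop :=
  forall x : T, exists K : set T, compact K /\ nbhs x K.

Definition metrizable_space : Prop :=
  exists d : T -> T -> Rdefinitions.R,
    (forall x y, 0 <= d x y) /\ (forall x y, d x y = 0 <-> x = y) /\
    (forall x y, d x y = d y x) /\ (forall x y z, d x z <= d x y + d y z) /\
    (forall A : set T, open A <->
       (forall x, A x -> exists e : Rdefinitions.R, 0 < e /\ [set y | d x y < e] `<=` A)).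

Record phom := PHom { pdom : set T; pcod : set T; pfun : T -> T; pinv : T -> T }.

Definition is_phom (F : phom) : Prop :=
  open (pdom F) /\ open (pcod F) /\
  pfun F @` pdom F = pcod F /\ pinv F @` pcod F = pdom F /\
  (forall x, pdom F x -> pinv F (pfun F x) = x) /\
  (forall y, pcod F y -> pfun F (pinv F y) = y) /\
  {within pdom F, continuous (pfun F)} /\
  {within pcod F, continuous (pinv F)}.

Definition phom_id : phom := PHom setT setT id id.
Definition phom_inv (F : phom) : phom := PHom (pcod F) (pdom F) (pinv F) (pfun F).
Definition phom_comp (G H : phom) : phom :=
  PHom (pdom H `&` pfun H @^-1` pdom G)
       (pcod G `&` pinv G @^-1` pcod H)
       (pfun G \o pfun H) (pinv H \o pinv G).
Definition phom_restr (F : phom) (U : set T) : phom :=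
  PHom (pdom F `&` U) (pfun F @` (pdom F `&` U)) (pfun F) (pinv F).

Definition pseudogroup (P : set phom) : Prop :=
  (forall F, P F -> is_phom F) /\
      P phom_id /\
      (forall F, P F -> P (phom_inv F)) /\
      (forall G H, P G -> P H -> P (phom_comp G H)) /\
      (forall F U, P F -> open U -> P (phom_restr F U)) /\
      (forall F, is_phom F ->
         (forall x, pdom F x -> exists U, [/\ open U, U x & P (phom_restr F U)]) ->
         P F).

Variable P : set phom.

Definition germ_at (x : T) (f : T -> T) : set (T -> T) :=
  [set h | nbhs x [set y | h y = f y]].
Definition germ := (T * set (T -> T))%type.
Definition germ_of (F : phom) (x : T) : germ := (x, germ_at x (pfun F)).

Definition GG : set germ :=
  [set g | exists F x, [/\ P F, pdom F x & g = germ_of F x]].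
Definition Grestr (A : set T) : set germ :=
  [set g | exists F x, [/\ P F, pdom F x, A x, A (pfun F x) & g = germ_of F x]].

Definition gmul (A B : set germ) : set germ :=
  [set g | exists F H y, P F /\ P H /\ pdom H y /\ pdom F (pfun H y) /\
     B (germ_of H y) /\ A (germ_of F (pfun H y)) /\
     g = germ_of (phom_comp F H) y].
Definition ginv (A : set germ) : set germ :=
  [set g | exists F x, [/\ P F, pdom F x, A (germ_of F x) &
     g = germ_of (phom_inv F) (pfun F x)]].
Fixpoint gpow (A : set germ) (k : nat) : set germ :=
  match k with
  | 0 => A
  | k'.+1 => gmul (gpow A k') A
  end.
(* \bigcup_{k=1}^n A^k *)
Definition gpow_upto (A : set germ) (n : nat) : set germ :=
  [set g | exists k, (k < n)%N /\ gpow A k g].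

Definition gopen (O : set germ) : Prop :=
  O `<=` GG /\
  forall g, O g -> exists F U, [/\ P F, open U, U `<=` pdom F,
     (germ_of F @` U) g & germ_of F @` U `<=` O].

Definition gcompact (K : set germ) : Prop :=
  K `<=` GG /\
  forall C : set (set germ), (forall O, C O -> gopen O) ->
    (forall g, K g -> exists O, C O /\ O g) ->
    exists s : seq (set germ), (forall O, List.In O s -> C O) /\
      (forall g, K g -> exists O, List.In O s /\ O g).

Definition gnbhd_in (A : set germ) (g : germ) (N : set germ) : Prop :=
  exists O, [/\ gopen O, O g & O `&` A `<=` N].

Definition top_transversal (X : set T) : Prop :=
  exists U, [/\ open U, U `<=` X &
    forall x, exists F, [/\ P F, pdom F x & U (pfun F x)]].

Definition compact_generating_pair (S : set germ) (X : set T) : Prop :=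
  [/\ gcompact S, compact X, top_transversal X &
      forall g, Grestr X g -> exists n,
        gnbhd_in (Grestr X) g (gpow_upto (S `|` ginv S) n)].

Definition compactly_generated : Prop :=
  exists S X, compact_generating_pair S X.

End Germs.

(* Fix a compact generating pair (S0, X0) and open sets U0 <= X0, U <= X meeting
   every orbit.  Using metrizability, every point has a pseudogroup element B
   mapping a closed neighbourhood L of it into U (resp. U0).  Finitely many such
   "transports" into U cover X0 and the origins and targets of S0, and finitely
   many transports into U0 cover X.  Let S consist of the germs at points of X of
   the composites B_b B_k (from X through U0 back into U), and of the conjugates
   B_b' s B_b^-1 of the germs s in S0.  Both families are images of compact sets
   under maps that are continuous for the germ topology, so S is compact.  A germ
   g of G|X, conjugated by transports into U0, lies in G|X0, hence, locally
   uniformly, is a word of length <= n in S0 and its inverses; conjugating every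
   letter by transports into U turns it into a word in S, and g is that word
   framed by two letters of the first family. *)

From Pilot Require Import Defs.
From HB Require Import structures.
From mathcomp Require Import all_boot all_order all_algebra.
From mathcomp Require Import all_classical all_reals all_analysis.
From mathcomp Require Import finmap Rstruct lra.
Set Implicit Arguments. Unset Strict Implicit. Unset Printing Implicit Defensive.
Import Order.TTheory.
Local Open Scope classical_set_scope.
Local Notation pinv := Defs.pinv.

Definition list_set (I : Type) (l : seq I) : set I := [set i | List.In i l].

Lemma list_set_cat (I : Type) (l l' : seq I) :
  list_set (l ++ l') = list_set l `|` list_set l'.
Proof. by apply/seteqP; split => i /List.in_app_iff. Qed.

Lemma In_mem (T : eqType) (s : seq T) x : List.In x s -> x \in s.
Proof. by elim: s => // a s IH [->|/IH]; rewrite inE ?eqxx // => ->; rewrite orbT. Qed.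

Lemma mem_In (T : eqType) (s : seq T) x : x \in s -> List.In x s.
Proof. by elim: s => // a s IH; rewrite inE => /orP [/eqP ->|/IH]; [left|right]. Qed.

Lemma list_choice (A B : Type) (R : A -> B -> Prop) (l : seq A) :
  (forall a, List.In a l -> exists b, R a b) ->
  exists l' : seq B, (forall a, List.In a l -> exists2 b, List.In b l' & R a b) /\
    (forall b, List.In b l' -> exists a, R a b).
Proof.
elim: l => [|a l IH] h; first by exists [::].
have [l' [hl' hl2]] := IH (fun a' ha' => h a' (or_intror ha')).
have [b hb] := h a (or_introl erefl).
exists (b :: l'); split.
  move=> a' [<-|/hl' [b' ? ?]]; first by exists b; [left|].
  by exists b'; [right|].
by move=> b' [<-|/hl2//]; exists a.
Qed.

Lemma metrizable_closed_nbhs_sub (T : topologicalType) :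
  metrizable_space T -> forall (x : T) (V : set T), open V -> V x ->
  exists W L, [/\ open W, closed L, W x, W `<=` L & L `<=` V].
Proof.
move=> [d [d0 [dE [dS [dT dO]]]]] x V oV Vx.
have [e [e0 sV]] := (dO V).1 oV x Vx.
exists [set y | (d x y < e/2)%R], [set y | (d x y <= e/2)%R]; split.
- apply/(dO _).2 => z /= hz; exists (e/2 - d x z)%R; split; first by lra.
  move=> y /= hy; have := dT x z y; lra.
- rewrite -openC; apply/(dO _).2 => z /= /negP; rewrite -ltNge => hz.
  exists (d x z - e/2)%R; split; first by lra.
  move=> y /= hy; have := dT x y z; rewrite (dS y z) => h; apply/negP; rewrite -ltNge; lra.
- by rewrite /= (proj2 (dE x x)) //; lra.
- by move=> y /= hy; lra.
- by move=> y /= hy; apply: sV => /=; lra.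
Qed.

(* [compact_cover] is only stated for pointed spaces. *)
Section PointedCopy.
Variables (T : topologicalType) (x0 : T).
Let pT : Type := T.
HB.instance Definition _ := Topological.on pT.
HB.instance Definition _ := isPointed.Build pT x0.
Lemma compact_cover_compact (A : set T) : compact A ->
  forall (I : choiceType) (D : set I) (f : I -> set T),
  (forall i, D i -> open (f i)) -> A `<=` \bigcup_(i in D) f i ->
  exists2 D' : {fset I}, {subset D' <= D} & A `<=` \bigcup_(i in [set i | i \in D']) f i.
Proof. by move=> cA; have : @compact pT A by []; rewrite compact_cover. Qed.
End PointedCopy.

Lemma compact_list_subcover (T : topologicalType) (I : Type) (W : I -> set T)
    (D : set I) (X : set T) :
  compact X -> (forall i, D i -> open (W i)) -> X `<=` \bigcup_(i in D) W i ->
  exists l : seq I, list_set l `<=` D /\ X `<=` \bigcup_(i in list_set l) W i.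
Proof.
move=> cX oW XW.
case: (pselect (exists x, X x)) => [[x0 Xx0]|nX]; last first.
  by exists [::]; split => // x Xx; exfalso; apply: nX; exists x.
have [i0 _ _] := XW x0 Xx0.
have /choice [f hf] : forall x, exists i, X x -> D i /\ W i x.
  by move=> x; case: (pselect (X x)) => [/XW [i Di Wi]|]; [exists i | exists i0].
have [||D' sD' sD] := compact_cover_compact x0 cX (D := X) (f := W \o f).
- by move=> x Xx; case: (hf x Xx) => /oW.
- by move=> x Xx; exists x => //; case: (hf x Xx).
exists (map f (finmap.enum_fset D')); split.
  move=> i /List.in_map_iff [x [<- /In_mem/sD']].
  by move=> /set_mem /hf [].
move=> x /sD [y Dy Wy]; exists (f y) => //.
by apply: List.in_map; apply: mem_In.
Qed.

Section Pseudogroup.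
Variables (T : topologicalType) (P : set (phom T)).
Hypothesis hP : pseudogroup P.

Lemma P_is_phom F : P F -> is_phom F.
Proof. by case: hP => h _; apply: h. Qed.

Lemma P_inv F : P F -> P (phom_inv F).
Proof. by case: hP => _ [_ [h _]]; apply: h. Qed.

Lemma P_comp F G : P F -> P G -> P (phom_comp F G).
Proof. by case: hP => _ [_ [_ [h _]]]; apply: h. Qed.

Lemma pdom_open F : P F -> open (pdom F).
Proof. by move=> /P_is_phom []. Qed.

Lemma pinvK F x : P F -> pdom F x -> pinv F (pfun F x) = x.
Proof. by move=> /P_is_phom [_ [_ [_ [_ [h _]]]]]; apply: h. Qed.

Lemma pcod_pfun F x : P F -> pdom F x -> pcod F (pfun F x).
Proof. by move=> /P_is_phom [_ [_ [h _]]] dx; rewrite -h; exists x. Qed.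

Lemma pfun_cvg F x : P F -> pdom F x -> pfun F @ x --> pfun F x.
Proof.
move=> /P_is_phom [od [_ [_ [_ [_ [_ [c _]]]]]]] dx.
by move: c; rewrite continuous_open_subspace // => c; apply/c/mem_set.
Qed.

Lemma pinv_cvg F y : P F -> pcod F y -> pinv F @ y --> pinv F y.
Proof.
move=> /P_is_phom [_ [oc [_ [_ [_ [_ [_ c]]]]]]] dy.
by move: c; rewrite continuous_open_subspace // => c; apply/c/mem_set.
Qed.

Lemma near_pdom F x : P F -> pdom F x -> \forall z \near x, pdom F z.
Proof. by move=> PF dx; apply: open_nbhs_nbhs; split => //; apply: pdom_open. Qed.

Lemma near_pfun F w (Q : set T) : P F -> pdom F w ->
  (\forall z \near pfun F w, Q z) -> \forall z \near w, Q (pfun F z).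
Proof. by move=> PF dw; apply: (pfun_cvg PF dw). Qed.

Lemma near_pinv F w (Q : set T) : P F -> pdom F w ->
  (\forall z \near w, Q z) -> \forall z \near pfun F w, Q (pinv F z).
Proof.
move=> PF dw hQ; have c := pinv_cvg PF (pcod_pfun PF dw).
by rewrite (pinvK PF dw) in c; apply: c.
Qed.

Lemma open_pfun_preimage F (W : set T) : P F -> open W ->
  open [set x | pdom F x /\ W (pfun F x)].
Proof.
move=> PF oW; rewrite openE => x [dx Wx].
have hW : \forall z \near x, W (pfun F z).
  by apply: near_pfun => //; apply: open_nbhs_nbhs.
by near=> z; split; [apply: (near (near_pdom PF dx) z) | apply: (near hW z)].
Unshelve. all: by end_near.
Qed.

Lemma closed_pfun_preimage F (L L' : set T) : P F -> closed L -> closed L' ->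
  L `<=` pdom F -> closed [set x | L x /\ L' (pfun F x)].
Proof.
move=> PF cL cL' sL; rewrite -openC.
have -> : ~` [set x | L x /\ L' (pfun F x)] =
    ~` L `|` [set x | pdom F x /\ (~` L') (pfun F x)].
  apply/seteqP; split => x /=.
    case: (pselect (L x)) => [Lx nLL'|nLx _]; last by left.
    by right; split; [apply: sL | move=> L'x; apply: nLL'].
  by case=> [nL [Lx _]|[_ nL'] [_ L'x]]; [apply: nL | apply: nL'].
by apply: openU; [rewrite openC | apply: open_pfun_preimage => //; rewrite openC].
Qed.

Lemma germ_of_near (F G : phom T) x : (\forall z \near x, pfun F z = pfun G z) ->
  germ_of F x = germ_of G x.
Proof.
move=> H; rewrite /germ_of /germ_at; congr pair; apply/seteqP; split => h /= Hh.
  by near=> z => /=; rewrite (near Hh z) // (near H z).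
by near=> z => /=; rewrite (near Hh z) // (near H z).
Unshelve. all: by end_near.
Qed.

Lemma germ_of_inj (F G : phom T) x y : germ_of F x = germ_of G y ->
  x = y /\ \forall z \near x, pfun F z = pfun G z.
Proof.
case=> <- E; split => //.
have : germ_at x (pfun F) (pfun F) by apply: filterE.
by rewrite E.
Qed.

Lemma germ_of_pfun (F G : phom T) x y : germ_of F x = germ_of G y ->
  pfun F x = pfun G x.
Proof. by move=> /germ_of_inj [_ /nbhs_singleton]. Qed.

Lemma Grestr_germ_ends (A : set T) F x : Grestr P A (germ_of F x) -> A x /\ A (pfun F x).
Proof.
case=> F' [x' [_ _ Ax' AFx' E]]; have [ex _] := germ_of_inj E.
by rewrite (germ_of_pfun E) ex.
Qed.

Lemma gopen_germ_image F (U : set T) : P F -> open U -> U `<=` pdom F ->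
  gopen P (germ_of F @` U).
Proof.
move=> PF oU sU; split; first by move=> g [u Uu <-]; exists F, u; split => //; apply: sU.
by move=> g [u Uu <-]; exists F, U; split => //; exists u.
Qed.

Lemma open_germ_preimage G O : P G -> gopen P O ->
  open [set x | pdom G x /\ O (germ_of G x)].
Proof.
move=> PG [_ gO]; rewrite openE => x [dx Ox].
have [F [U [PF oU sU [u Uu Eu] sO]]] := gO _ Ox.
have [ux Hn] := germ_of_inj Eu; subst u.
have hU : \forall z \near x, U z by apply: open_nbhs_nbhs.
near=> z; split; first by apply: (near (near_pdom PG dx) z).
apply: sO; exists z; first by apply: (near hU z).
by apply: germ_of_near; apply: (near (nbhs_interior Hn) z).
Unshelve. all: by end_near.
Qed.

Lemma gopenU (A B : set (germ T)) : gopen P A -> gopen P B -> gopen P (A `|` B).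
Proof.
move=> [sA oA] [sB oB]; split; first by move=> g [/sA|/sB].
move=> g [/oA|/oB] [F [U [PF oU sU Ug sUA]]]; exists F, U; split => //.
  by move=> h /sUA; left.
by move=> h /sUA; right.
Qed.

Definition germs_from (W : set T) : set (germ T) :=
  [set g | exists F z, [/\ P F, pdom F z, W z & g = germ_of F z]].
Definition germs_to (W : set T) : set (germ T) :=
  [set g | exists F z, [/\ P F, pdom F z, W (pfun F z) & g = germ_of F z]].

Lemma gopen_germs_from W : open W -> gopen P (germs_from W).
Proof.
move=> oW; split; first by move=> g [F [z [PF dz _ ->]]]; exists F, z.
move=> g [F [z [PF dz Wz ->]]]; exists F, (pdom F `&` W); split => //.
- by apply: openI => //; apply: pdom_open.
- by exists z.
- by move=> g' [y [dy Wy] <-]; exists F, y.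
Qed.

Lemma gopen_germs_to W : open W -> gopen P (germs_to W).
Proof.
move=> oW; split; first by move=> g [F [z [PF dz _ ->]]]; exists F, z.
move=> g [F [z [PF dz Wz ->]]].
exists F, [set y | pdom F y /\ W (pfun F y)]; split => //.
- exact: open_pfun_preimage.
- by move=> y [].
- by exists z.
- by move=> g' [y [dy Wy] <-]; exists F, y.
Qed.

Lemma germs_from_origin W F z : germs_from W (germ_of F z) -> W z.
Proof. by case=> F' [z' [_ _ Wz /germ_of_inj [-> _]]]. Qed.

Lemma germs_to_target W F z : germs_to W (germ_of F z) -> W (pfun F z).
Proof.
by case=> F' [z' [_ _ Wz E]]; have [ez _] := germ_of_inj E; rewrite (germ_of_pfun E) ez.
Qed.

End Pseudogroup.

Section GermCompactness.
Variables (T : topologicalType) (P : set (phom T)).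
Hypothesis hP : pseudogroup P.

Lemma gcompact_list_subcover (I : Type) (O : I -> set (germ T)) (D : set I) K :
  gcompact P K -> (forall i, D i -> gopen P (O i)) -> K `<=` \bigcup_(i in D) O i ->
  exists l : seq I, list_set l `<=` D /\ K `<=` \bigcup_(i in list_set l) O i.
Proof.
move=> [_ cK] oO KO.
have [||s [sC sK]] := cK [set Q | exists2 i, D i & Q = O i].
- by move=> Q [i Di ->]; apply: oO.
- by move=> g /KO [i Di Oig]; exists (O i); split => //; exists i.
have [l [sl ls]] := list_choice (R := fun Q i => D i /\ Q = O i)
  (fun Q sQ => let: ex_intro2 i Di EQ := sC Q sQ in ex_intro _ i (conj Di EQ)).
exists l; split; first by move=> i /ls [Q []].
by move=> g /sK [Q [/sl [i li [_ ->]] Qg]]; exists i.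
Qed.

Lemma gcompactU (A B : set (germ T)) : gcompact P A -> gcompact P B ->
  gcompact P (A `|` B).
Proof.
move=> [sA cA] [sB cB]; split; first by move=> g [/sA|/sB].
move=> C oC cov.
have [sa [ha1 ha2]] := cA C oC (fun g Ag => cov g (or_introl Ag)).
have [sb [hb1 hb2]] := cB C oC (fun g Bg => cov g (or_intror Bg)).
exists (sa ++ sb); split; first by move=> O /List.in_app_iff [/ha1|/hb1].
by move=> g [/ha2|/hb2] [Q [lQ Qg]]; exists Q; split => //; apply/List.in_app_iff; [left|right].
Qed.

Lemma gcompact_bigcup_list (I : Type) (l : seq I) (A : I -> set (germ T)) :
  (forall i, List.In i l -> gcompact P (A i)) ->
  gcompact P (\bigcup_(i in list_set l) A i).
Proof.
elim: l => [|i l IH] cA.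
  split; first by move=> g [].
  by move=> C _ _; exists [::]; split => // g [].
have -> : \bigcup_(j in list_set (i :: l)) A j =
    A i `|` \bigcup_(j in list_set l) A j.
  by rewrite -bigcup_setU1; congr bigcup; apply/seteqP; split => j [->|]; by [left|right].
by apply: gcompactU; [apply: cA; left | apply: IH => j lj; apply: cA; right].
Qed.

Lemma gcompact_germ_image G (K : set T) : P G -> compact K -> K `<=` pdom G ->
  gcompact P (germ_of G @` K).
Proof.
move=> PG cK sK; split; first by move=> g [x Kx <-]; exists G, x; split => //; apply: sK.
move=> C oC cov.
have [||l [lC Kl]] := compact_list_subcover
  (W := fun Q => [set x | pdom G x /\ Q (germ_of G x)]) (D := C) cK.
- by move=> Q CQ; apply: (open_germ_preimage hP PG); apply: oC.
- move=> x Kx; have [Q [CQ Qx]] : exists O, C O /\ O (germ_of G x) by apply: cov; exists x.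
  by exists Q => //; split => //; apply: sK.
exists l; split; first by move=> Q /lC.
by move=> g [x /Kl [Q lQ [_ Qx]] <-]; exists Q.
Qed.

Definition phom_conj (B' H B : phom T) := phom_comp B' (phom_comp H (phom_inv B)).

Lemma P_conj B' H B : P B' -> P H -> P B -> P (phom_conj B' H B).
Proof. by move=> PB' PH PB; do 2 apply: P_comp => //; apply: P_inv. Qed.

Lemma pfun_conj B' H B w : P B -> pdom B w ->
  pfun (phom_conj B' H B) (pfun B w) = pfun B' (pfun H w).
Proof. by move=> PB dw; rewrite /= (pinvK hP PB dw). Qed.

Lemma pdom_conj B' H B w : P B -> pdom B w -> pdom H w -> pdom B' (pfun H w) ->
  pdom (phom_conj B' H B) (pfun B w).
Proof. by move=> PB dw dH dB'; rewrite /= (pinvK hP PB dw); do !split => //; exact: (pcod_pfun hP PB dw). Qed.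

Lemma germ_conj_near B' H H' B w : P B -> pdom B w ->
  (\forall z \near w, pfun H z = pfun H' z) ->
  germ_of (phom_conj B' H B) (pfun B w) = germ_of (phom_conj B' H' B) (pfun B w).
Proof.
move=> PB dw hn; apply: germ_of_near.
by apply: filterS (near_pinv hP PB dw hn) => z /= ->.
Qed.

Lemma germ_conj_comp B'' H' B' H B w : P B -> P B' -> P H -> pdom B w -> pdom H w ->
  pdom B' (pfun H w) ->
  germ_of (phom_comp (phom_conj B'' H' B') (phom_conj B' H B)) (pfun B w) =
  germ_of (phom_conj B'' (phom_comp H' H) B) (pfun B w).
Proof.
move=> PB PB' PH dw dH dB'; apply: germ_of_near.
have dB'H : \forall v \near w, pdom B' (pfun H v).
  by apply: (near_pfun hP PH dH); apply: (near_pdom hP).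
by apply: filterS (near_pinv hP PB dw dB'H) => z /= h; rewrite (pinvK hP PB' h).
Qed.

Definition conj_germs (B' B : phom T) (L L' : set T) (K : set (germ T)) : set (germ T) :=
  [set g | exists F z, [/\ P F, pdom F z, K (germ_of F z), L z /\ L' (pfun F z) &
     g = germ_of (phom_conj B' F B) (pfun B z)]].

Lemma gcompact_conj_germs B' B (L L' : set T) K : P B' -> P B ->
  closed L -> closed L' -> L `<=` pdom B -> L' `<=` pdom B' ->
  gcompact P K -> gcompact P (conj_germs B' B L L' K).
Proof.
move=> PB' PB cL cL' sL sL' cK.
split.
  move=> g [F [z [PF dz _ [Lz L'z] ->]]].
  exists (phom_conj B' F B), (pfun B z); split => //; first exact: P_conj.
  by apply: pdom_conj => //; [apply: sL | apply: sL'].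
move=> C oC cov.
case: (pselect (exists Q, C Q)) => [[Q0 CQ0]|nC]; last first.
  by exists [::]; split => // g /cov [Q [CQ _]]; exfalso; apply: nC; exists Q.
pose Os Q := [set g | exists F z, [/\ P F, pdom F z, pdom B z /\ pdom B' (pfun F z),
  Q (germ_of (phom_conj B' F B) (pfun B z)) & g = germ_of F z]].
(* Germs of K outside the closed constraint are covered by N, added to every
   member of the pulled-back cover. *)
pose N := germs_from P (~` L) `|` germs_to P (~` L').
have oOs Q : gopen P Q -> gopen P (Os Q `|` N).
  move=> gQ; apply: gopenU; last by apply: gopenU;
    [apply: (gopen_germs_from hP) | apply: (gopen_germs_to hP)]; rewrite openC.
  split; first by move=> g [F [z [PF dz _ _ ->]]]; exists F, z.
  move=> g [F [z [PF dz [dB dB'] Qc ->]]].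
  have oV := open_germ_preimage hP (P_conj PB' PF PB) gQ.
  exists F, ([set x | pdom F x /\ pdom B' (pfun F x)] `&`
    [set x | pdom B x /\ [set v | pdom (phom_conj B' F B) v /\
       Q (germ_of (phom_conj B' F B) v)] (pfun B x)]); split => //.
  - by apply: openI; apply: (open_pfun_preimage hP) => //; apply: (pdom_open hP).
  - by move=> x [[]].
  - by exists z => //; split => //; split => //; split => //; apply: pdom_conj.
  - by move=> g' [x [[dx dx'] [dBx [_ Qx]]] <-]; exists F, x.
have [||l [lC Kl]] := gcompact_list_subcover (O := fun Q => Os Q `|` N) (D := C) cK.
- by move=> Q /oC /oOs.
- move=> g Kg; have [F [z [PF dz Eg]]] := cK.1 _ Kg; subst g.
  case: (pselect (L z)) => Lz; last by exists Q0 => //; right; left; exists F, z.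
  case: (pselect (L' (pfun F z))) => L'z; last by exists Q0 => //; right; right; exists F, z.
  have [Q [CQ Qg]] : exists O, C O /\ O (germ_of (phom_conj B' F B) (pfun B z)).
    by apply: cov; exists F, z.
  by exists Q => //; left; exists F, z; split => //; split; [apply: sL | apply: sL'].
exists l; split; first by move=> Q /lC.
move=> g [F [z [PF dz Kz [Lz L'z] ->]]].
have [Q lQ [|[/germs_from_origin//|/germs_to_target//]]] := Kl _ Kz.
move=> [F' [z' [_ _ _ Qc E]]]; exists Q; split => //.
have [ez hn] := germ_of_inj E; subst z'.
by rewrite (germ_conj_near _ PB (sL _ Lz) hn).
Qed.

Lemma gpowS_left (A : set (germ T)) k q : gpow P A k q ->
  forall (Q F : phom T) y, P Q -> P F -> pdom Q y -> q = germ_of Q y ->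
  pdom F (pfun Q y) -> A (germ_of F (pfun Q y)) ->
  gpow P A k.+1 (germ_of (phom_comp F Q) y).
Proof.
elim: k q => [|k IH] q hq Q F y PQ PF dQ Eq dF AF.
  by exists F, Q, y; rewrite -Eq; do ! split => //.
case: hq => F' [H' [y' [PF' [PH' [dH' [dF' [AH' [gF' Eq']]]]]]]].
rewrite Eq in Eq'; have [ey hn] := germ_of_inj Eq'; subst y'.
have ev := germ_of_pfun Eq'; rewrite /= in ev.
have IH' := IH _ gF' F' F (pfun H' y) PF' PF dF' erefl.
rewrite -ev in IH'; have {}IH' := IH' dF AF.
exists (phom_comp F F'), H', y.
split; first exact: P_comp.
do 2 (split => //); split; first by split => //; rewrite /preimage /= -ev.
do 2 (split => //).
by apply: germ_of_near; apply: filterS hn => z /= ->.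
Qed.

End GermCompactness.

Section Transports.
Variables (T : topologicalType) (P : set (phom T)).
Hypothesis hP : pseudogroup P.

(* [tr_dom] is closed so that the germs carried by transports form compact sets. *)
Record transport := Transport { tr_map : phom T; tr_nbhd : set T; tr_dom : set T }.

Definition transport_into (U : set T) (t : transport) : Prop :=
  [/\ P (tr_map t), open (tr_nbhd t), closed (tr_dom t), tr_nbhd t `<=` tr_dom t &
      tr_dom t `<=` [set z | pdom (tr_map t) z /\ U (pfun (tr_map t) z)]].

Definition meets_every_orbit (U : set T) : Prop :=
  forall x, exists F, [/\ P F, pdom F x & U (pfun F x)].

Variable U : set T.

Section TransportInto.
Variable t : transport.
Hypothesis tU : transport_into U t.

Lemma tr_map_P : P (tr_map t).
Proof. by case: tU. Qed.

Lemma tr_nbhd_open : open (tr_nbhd t).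
Proof. by case: tU. Qed.

Lemma tr_dom_closed : closed (tr_dom t).
Proof. by case: tU. Qed.

Lemma tr_nbhd_dom : tr_nbhd t `<=` tr_dom t.
Proof. by case: tU. Qed.

Lemma tr_dom_pdom : tr_dom t `<=` pdom (tr_map t).
Proof. by case: tU => _ _ _ _ sL z /sL []. Qed.

Lemma tr_dom_into z : tr_dom t z -> U (pfun (tr_map t) z).
Proof. by case: tU => _ _ _ _ sL /sL []. Qed.

End TransportInto.

Hypotheses (hm : metrizable_space T) (oU : open U) (orbU : meets_every_orbit U).

Lemma transport_into_exists y : exists2 t, transport_into U t & tr_nbhd t y.
Proof.
have [F [PF dy Uy]] := orbU y.
have [W [L [oW cL Wy sWL sLV]]] :=
  metrizable_closed_nbhs_sub hm (open_pfun_preimage hP PF oU) (conj dy Uy).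
by exists (Transport F W L).
Qed.

Lemma transport_cover (X : set T) : compact X ->
  exists l, list_set l `<=` transport_into U /\ X `<=` \bigcup_(t in list_set l) tr_nbhd t.
Proof.
move=> cX; apply: (compact_list_subcover cX); first by move=> t [].
by move=> x _; have [t tU Wx] := transport_into_exists x; exists t.
Qed.

Lemma transport_cover_ends (K : set (germ T)) : gcompact P K ->
  exists l, list_set l `<=` transport_into U /\
    forall F z, P F -> pdom F z -> K (germ_of F z) ->
      (\bigcup_(t in list_set l) tr_nbhd t) z /\
      (\bigcup_(t in list_set l) tr_nbhd t) (pfun F z).
Proof.
move=> cK.
have [||l1 [l1U Kl1]] := gcompact_list_subcover
  (O := fun t => germs_from P (tr_nbhd t)) (D := transport_into U) cK.
- by move=> t [_ oW _ _ _]; apply: gopen_germs_from.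
- move=> g Kg; have [F [z [PF dz Eg]]] := cK.1 _ Kg; subst g.
  by have [t tU Wz] := transport_into_exists z; exists t => //; exists F, z.
have [||l2 [l2U Kl2]] := gcompact_list_subcover
  (O := fun t => germs_to P (tr_nbhd t)) (D := transport_into U) cK.
- by move=> t [_ oW _ _ _]; apply: gopen_germs_to.
- move=> g Kg; have [F [z [PF dz Eg]]] := cK.1 _ Kg; subst g.
  by have [t tU Wz] := transport_into_exists (pfun F z); exists t => //; exists F, z.
exists (l1 ++ l2); rewrite list_set_cat; split; first by rewrite subUset.
move=> F z PF dz Kz; split.
  by have [t lt /germs_from_origin Wz] := Kl1 _ Kz; exists t => //; left.
by have [t lt /germs_to_target Wz] := Kl2 _ Kz; exists t => //; right.
Qed.

End Transports.

Section Generation.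
Variables (T : topologicalType) (P : set (phom T)).
Hypothesis hP : pseudogroup P.
Variables (S0 : set (germ T)) (X0 U0 X U : set T) (Ls Ks : seq (transport T)).
Hypotheses (sU0X0 : U0 `<=` X0) (sUX : U `<=` X).
Hypotheses (LsU : list_set Ls `<=` transport_into P U)
  (KsU0 : list_set Ks `<=` transport_into P U0).

Definition transit_germs (k b : transport T) : set (germ T) :=
  germ_of (phom_comp (tr_map b) (tr_map k)) @`
    (X `&` [set x | tr_dom k x /\ tr_dom b (pfun (tr_map k) x)]).

Definition generating_set : set (germ T) :=
  \bigcup_(k in list_set Ks) \bigcup_(b in list_set Ls) transit_germs k b `|`
  \bigcup_(b in list_set Ls) \bigcup_(b' in list_set Ls)
    conj_germs P (tr_map b') (tr_map b) (tr_dom b) (tr_dom b') S0.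

Local Notation S := generating_set.

Lemma transit_germ_gen k b x : list_set Ks k -> list_set Ls b -> X x ->
  tr_dom k x -> tr_dom b (pfun (tr_map k) x) ->
  S (germ_of (phom_comp (tr_map b) (tr_map k)) x).
Proof. by move=> lk lb Xx kx bx; left; exists k => //; exists b => //; exists x. Qed.

Lemma conj_germ_gen b b' F z : list_set Ls b -> list_set Ls b' -> P F -> pdom F z ->
  S0 (germ_of F z) -> tr_dom b z -> tr_dom b' (pfun F z) ->
  S (germ_of (phom_conj (tr_map b') F (tr_map b)) (pfun (tr_map b) z)).
Proof. by move=> lb lb' PF dz S0z bz b'z; right; exists b => //; exists b' => //; exists F, z. Qed.

Lemma generating_set_sub_Grestr : S `<=` Grestr P X.
Proof.
move=> g [[k lk [b lb [x [Xx [kx bx]] <-]]] | [b lb [b' lb' [F [z [PF dz _ [bz b'z] ->]]]]]].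
  have kU0 := KsU0 lk; have bU := LsU lb.
  exists (phom_comp (tr_map b) (tr_map k)), x; split => //.
  - exact: (P_comp hP (tr_map_P bU) (tr_map_P kU0)).
  - by split; [exact: (tr_dom_pdom kU0 kx) | exact: (tr_dom_pdom bU bx)].
  - exact/sUX/(tr_dom_into bU bx).
have bU := LsU lb; have b'U := LsU lb'.
have [PB dB] := (tr_map_P bU, tr_dom_pdom bU bz).
exists (phom_conj (tr_map b') F (tr_map b)), (pfun (tr_map b) z); split => //.
- exact: (P_conj hP (tr_map_P b'U) PF PB).
- exact: (pdom_conj hP PB dB dz (tr_dom_pdom b'U b'z)).
- exact/sUX/(tr_dom_into bU bz).
- by rewrite (pfun_conj hP _ _ PB dB); exact/sUX/(tr_dom_into b'U b'z).
Qed.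

Lemma gcompact_generating_set : compact X -> gcompact P S0 -> gcompact P S.
Proof.
move=> cX cS0; apply: gcompactU; apply: gcompact_bigcup_list => i li;
  apply: gcompact_bigcup_list => j lj.
  have [iU0 jU] := (KsU0 li, LsU lj).
  apply: (gcompact_germ_image hP); first exact: (P_comp hP (tr_map_P jU) (tr_map_P iU0)).
    apply: compact_closedI cX _; apply: (closed_pfun_preimage hP) (tr_map_P iU0) _ _ _.
    - exact: (tr_dom_closed iU0).
    - exact: (tr_dom_closed jU).
    - by move=> z /(tr_dom_pdom iU0).
  by move=> x [_ [ix jx]]; split; [exact: (tr_dom_pdom iU0 ix) | exact: (tr_dom_pdom jU jx)].
have [iU jU] := (LsU li, LsU lj).
apply: (gcompact_conj_germs hP) (tr_map_P jU) (tr_map_P iU) _ _ _ _ cS0.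
- exact: (tr_dom_closed iU).
- exact: (tr_dom_closed jU).
- by move=> z /(tr_dom_pdom iU).
- by move=> z /(tr_dom_pdom jU).
Qed.

Hypothesis S0Ls : forall F z, P F -> pdom F z -> S0 (germ_of F z) ->
  (\bigcup_(t in list_set Ls) tr_nbhd t) z /\
  (\bigcup_(t in list_set Ls) tr_nbhd t) (pfun F z).

Lemma S0_origin_dom F z : P F -> pdom F z -> S0 (germ_of F z) ->
  exists2 b, list_set Ls b & tr_dom b z.
Proof. by move=> PF dz /(S0Ls PF dz) [[b lb /(tr_nbhd_dom (LsU lb)) bz] _]; exists b. Qed.

Lemma S0_target_dom F z : P F -> pdom F z -> S0 (germ_of F z) ->
  exists2 b, list_set Ls b & tr_dom b (pfun F z).
Proof. by move=> PF dz /(S0Ls PF dz) [_ [b lb /(tr_nbhd_dom (LsU lb)) bz]]; exists b. Qed.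

Lemma conj_letter g : (S0 `|` ginv P S0) g ->
  forall H w b, P H -> pdom H w -> g = germ_of H w -> list_set Ls b -> tr_dom b w ->
  exists2 b', list_set Ls b' & tr_dom b' (pfun H w) /\
    (S `|` ginv P S) (germ_of (phom_conj (tr_map b') H (tr_map b)) (pfun (tr_map b) w)).
Proof.
move=> [S0g|[F [z [PF dz S0z Eg]]]] H w b PH dw Eg' lb bw.
  rewrite Eg' in S0g; have [b' lb' b'w] := S0_target_dom PH dw S0g.
  by exists b' => //; split => //; left; apply: conj_germ_gen.
rewrite Eg' in Eg; have [ew hn] := germ_of_inj Eg; subst w.
have ev := germ_of_pfun Eg; rewrite /= (pinvK hP PF dz) in ev.
have [b' lb' b'z] := S0_origin_dom PF dz S0z.
have [bU b'U] := (LsU lb, LsU lb').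
have [PB PB'] := (tr_map_P bU, tr_map_P b'U).
exists b' => //; split; first by rewrite ev.
right; exists (phom_conj (tr_map b) F (tr_map b')), (pfun (tr_map b') z); split.
- exact: (P_conj hP PB PF PB').
- exact: (pdom_conj hP PB' (tr_dom_pdom b'U b'z) dz (tr_dom_pdom bU bw)).
- exact: conj_germ_gen.
- rewrite (pfun_conj hP _ _ PB' (tr_dom_pdom b'U b'z)).
  exact: (germ_conj_near hP _ PB (tr_dom_pdom bU bw) hn).
Qed.

Lemma conj_word k g : gpow P (S0 `|` ginv P S0) k g ->
  forall H w b, P H -> pdom H w -> g = germ_of H w -> list_set Ls b -> tr_dom b w ->
  exists2 b', list_set Ls b' & tr_dom b' (pfun H w) /\
    gpow P (S `|` ginv P S) k
      (germ_of (phom_conj (tr_map b') H (tr_map b)) (pfun (tr_map b) w)).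
Proof.
elim: k g => [|k IH]; first exact: conj_letter.
move=> g [F1 [H1 [y [PF1 [PH1 [dH1 [dF1 [aH1 [wF1 Eg]]]]]]]]] H w b PH dw Eg' lb bw.
rewrite Eg' in Eg; have [ew hn] := germ_of_inj Eg; subst y.
have ev := germ_of_pfun Eg; rewrite /= in ev.
have [b2 lb2 [b2w aC]] := conj_letter aH1 PH1 dH1 erefl lb bw.
have [b' lb' [b'w wC]] := IH _ wF1 F1 (pfun H1 w) b2 PF1 dF1 erefl lb2 b2w.
have [[bU b2U] b'U] := (LsU lb, LsU lb2, LsU lb').
have [[PB PB2] PB'] := (tr_map_P bU, tr_map_P b2U, tr_map_P b'U).
exists b' => //; split; first by rewrite ev.
exists (phom_conj (tr_map b') F1 (tr_map b2)), (phom_conj (tr_map b2) H1 (tr_map b)),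
  (pfun (tr_map b) w).
split; first exact: (P_conj hP PB' PF1 PB2).
split; first exact: (P_conj hP PB2 PH1 PB).
split; first exact: (pdom_conj hP PB (tr_dom_pdom bU bw) dH1 (tr_dom_pdom b2U b2w)).
rewrite (pfun_conj hP _ _ PB (tr_dom_pdom bU bw)).
split; first exact: (pdom_conj hP PB2 (tr_dom_pdom b2U b2w) dF1 (tr_dom_pdom b'U b'w)).
do 2 split => //.
rewrite (germ_conj_comp hP _ _ PB PB2 PH1 (tr_dom_pdom bU bw) dH1 (tr_dom_pdom b2U b2w)).
exact: (germ_conj_near hP _ PB (tr_dom_pdom bU bw) hn).
Qed.

Hypothesis X0Ls : X0 `<=` \bigcup_(t in list_set Ls) tr_nbhd t.

Lemma gpow_generating_set_of_conj F x k kj kl : list_set Ks kj -> list_set Ks kl ->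
  P F -> pdom F x -> X x -> X (pfun F x) -> tr_dom kj x -> tr_dom kl (pfun F x) ->
  gpow P (S0 `|` ginv P S0) k
    (germ_of (phom_conj (tr_map kl) F (tr_map kj)) (pfun (tr_map kj) x)) ->
  gpow P (S `|` ginv P S) k.+2 (germ_of F x).
Proof.
move=> lkj lkl PF dx Xx XFx kjx klx wH.
have [kjU klU] := (KsU0 lkj, KsU0 lkl).
have [PBj PBl] := (tr_map_P kjU, tr_map_P klU).
have [dBj dBl] := (tr_dom_pdom kjU kjx, tr_dom_pdom klU klx).
pose H := phom_conj (tr_map kl) F (tr_map kj).
have PH : P H := P_conj hP PBl PF PBj.
have dH : pdom H (pfun (tr_map kj) x) := pdom_conj hP PBj dBj dx dBl.
have Hx : pfun H (pfun (tr_map kj) x) = pfun (tr_map kl) (pfun F x) := pfun_conj hP _ _ PBj dBj.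
have [b lb /(tr_nbhd_dom (LsU lb)) bx] := X0Ls (sU0X0 (tr_dom_into kjU kjx)).
have [b' lb' [b'x wC]] := conj_word wH PH dH erefl lb bx.
have [bU b'U] := (LsU lb, LsU lb').
have [PB PB'] := (tr_map_P bU, tr_map_P b'U).
have dB := tr_dom_pdom bU bx.
pose C := phom_conj (tr_map b') H (tr_map b).
pose E := phom_comp (tr_map b) (tr_map kj).
pose Fa := phom_comp (tr_map b') (tr_map kl).
have [PC PE] : P C /\ P E := conj (P_conj hP PB' PH PB) (P_comp hP PB PBj).
have PFa : P Fa := P_comp hP PB' PBl.
have dE : pdom E x by split.
have dC : pdom C (pfun E x) := pdom_conj hP PB dB dH (tr_dom_pdom b'U b'x).
have dFa : pdom Fa (pfun F x).
  by split => //; rewrite /preimage /= -Hx; exact: (tr_dom_pdom b'U b'x).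
have CEx : pfun (phom_comp C E) x = pfun Fa (pfun F x).
  by rewrite /= (pinvK hP PB dB) (pinvK hP PBj dBj).
have wCE : gpow P (S `|` ginv P S) k.+1 (germ_of (phom_comp C E) x).
  exists C, E, x; do 4 (split => //).
  split; first by left; apply: transit_germ_gen.
  by split.
have SFa : S (germ_of Fa (pfun F x)) by apply: transit_germ_gen => //; rewrite -Hx.
(* Near x, F = Fa^-1 C E with C = B_b' H B_b^-1, E = B_b B_kj, H = B_kl F B_kj^-1. *)
have -> : germ_of F x = germ_of (phom_comp (phom_inv Fa) (phom_comp C E)) x.
  apply: germ_of_near.
  have nFa : \forall z \near x, pdom Fa (pfun F z).
    by apply: (near_pfun hP PF dx); apply: (near_pdom hP).
  have nE : \forall z \near x, pdom E z by apply: (near_pdom hP PE).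
  near=> z; have [dBjz dBz] : pdom E z by apply: (near nE z).
  have [dBlz dB'z] : pdom Fa (pfun F z) by apply: (near nFa z).
  by rewrite /= (pinvK hP PB dBz) (pinvK hP PBj dBjz) (pinvK hP PB' dB'z) (pinvK hP PBl dBlz).
apply: (gpowS_left hP wCE (P_comp hP PC PE) (P_inv hP PFa) (conj dE dC) erefl); rewrite CEx.
  exact: (pcod_pfun hP PFa dFa).
by right; exists Fa, (pfun F x).
Unshelve. all: by end_near.
Qed.

Hypothesis XKs : X `<=` \bigcup_(t in list_set Ks) tr_nbhd t.
Hypothesis gen0 : forall g, Grestr P X0 g ->
  exists n, gnbhd_in P (Grestr P X0) g (gpow_upto P (S0 `|` ginv P S0) n).

Lemma conj_transit_Grestr F x kj kl : list_set Ks kj -> list_set Ks kl ->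
  P F -> pdom F x -> tr_dom kj x -> tr_dom kl (pfun F x) ->
  Grestr P X0 (germ_of (phom_conj (tr_map kl) F (tr_map kj)) (pfun (tr_map kj) x)).
Proof.
move=> lkj lkl PF dx kjx klx; have [kjU klU] := (KsU0 lkj, KsU0 lkl).
have [PBj dBj] := (tr_map_P kjU, tr_dom_pdom kjU kjx).
exists (phom_conj (tr_map kl) F (tr_map kj)), (pfun (tr_map kj) x); split => //.
- exact: (P_conj hP (tr_map_P klU) PF PBj).
- exact: (pdom_conj hP PBj dBj dx (tr_dom_pdom klU klx)).
- exact/sU0X0/(tr_dom_into kjU kjx).
- by rewrite (pfun_conj hP _ _ PBj dBj); exact/sU0X0/(tr_dom_into klU klx).
Qed.

Lemma generating_set_generates g : Grestr P X g ->
  exists n, gnbhd_in P (Grestr P X) g (gpow_upto P (S `|` ginv P S) n).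
Proof.
case=> F [x [PF dx Xx XFx ->]].
have [kj lkj Wjx] := XKs Xx; have [kl lkl Wlx] := XKs XFx.
have [kjU klU] := (KsU0 lkj, KsU0 lkl).
have PBj := tr_map_P kjU.
pose H := phom_conj (tr_map kl) F (tr_map kj).
have PH : P H := P_conj hP (tr_map_P klU) PF PBj.
have [n [Og [gO Ox sO]]] := gen0
  (conj_transit_Grestr lkj lkl PF dx (tr_nbhd_dom kjU Wjx) (tr_nbhd_dom klU Wlx)).
pose V := [set z | pdom F z /\ tr_nbhd kl (pfun F z)] `&` tr_nbhd kj `&`
  [set z | pdom (tr_map kj) z /\ [set v | pdom H v /\ Og (germ_of H v)] (pfun (tr_map kj) z)].
have oV : open V.
  apply: openI; first by apply: openI;
    [exact: (open_pfun_preimage hP PF (tr_nbhd_open klU)) | exact: (tr_nbhd_open kjU)].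
  exact: (open_pfun_preimage hP PBj (open_germ_preimage hP PH gO)).
exists n.+2, (germ_of F @` V); split.
- have sVF : V `<=` pdom F by move=> z [[[]]].
  exact: (gopen_germ_image PF oV sVF).
- have kjx := tr_dom_pdom kjU (tr_nbhd_dom kjU Wjx).
  exists x => //; split; first by do !split.
  split => //; split => //.
  exact: (pdom_conj hP PBj kjx dx (tr_dom_pdom klU (tr_nbhd_dom klU Wlx))).
move=> _ [[x' Vx' <-] Gx']; have [Xx' XFx'] := Grestr_germ_ends Gx'.
case: Vx' => [[[dx' Wlx'] Wjx'] [_ [_ Ox']]].
have [kjx' klx'] := (tr_nbhd_dom kjU Wjx', tr_nbhd_dom klU Wlx').
have [k [kn wk]] := sO _ (conj Ox' (conj_transit_Grestr lkj lkl PF dx' kjx' klx')).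
by exists k.+2; split => //; exact: (gpow_generating_set_of_conj lkj lkl PF dx').
Qed.

End Generation.

Unset Implicit Arguments.
Theorem proposition2p3p2 (T : topologicalType) (P : set (phom T)) :
  loc_compact_space T -> metrizable_space T -> pseudogroup P ->
  compactly_generated P ->
  forall X : set T, compact X -> top_transversal P X ->
  exists S : set (germ T), S `<=` Grestr P X /\ compact_generating_pair P S X.
Proof.
move=> _ hm hP [S0 [X0 [cS0 cX0 [U0 [oU0 sU0X0 orbU0]] gen0]]] X cX tX.
have [U [oU sUX orbU]] := tX.
have [l1 [l1U X0l1]] := transport_cover hP hm oU orbU cX0.
have [l2 [l2U S0l2]] := transport_cover_ends hP hm oU orbU cS0.
have [Ks [KsU0 XKs]] := transport_cover hP hm oU0 orbU0 cX.
pose Ls := l1 ++ l2.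
have LsU : list_set Ls `<=` transport_into P U by rewrite list_set_cat subUset.
have [sl1 sl2] : list_set l1 `<=` list_set Ls /\ list_set l2 `<=` list_set Ls.
  by rewrite list_set_cat.
have X0Ls : X0 `<=` \bigcup_(t in list_set Ls) tr_nbhd t.
  by move=> x /X0l1; apply: bigcup_subset.
have S0Ls F z : P F -> pdom F z -> S0 (germ_of F z) ->
    (\bigcup_(t in list_set Ls) tr_nbhd t) z /\
    (\bigcup_(t in list_set Ls) tr_nbhd t) (pfun F z).
  move=> PF dz /(S0l2 F z PF dz) [h1 h2].
  by split; apply: (bigcup_subset (F := @tr_nbhd T) sl2).
exists (generating_set P S0 X Ls Ks); split; first exact: (generating_set_sub_Grestr hP sUX LsU KsU0).
split => //; first exact: (gcompact_generating_set hP LsU KsU0 cX cS0).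
exact: (generating_set_generates hP sU0X0 LsU KsU0 S0Ls X0Ls XKs gen0).
Qed.
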